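(* Let $\mathsf V$ be a variety, $h:\mathbf F_{\mathsf V}(z)\to\prod_{k=1}^m\mathbf E_k$ an algebraic e-generalization problem, and $\theta$ a congruence of $\mathbf F_{\mathsf V}(z)$. Then: (1) if $\theta\in\mathscr G(h)$, then $\theta$ is exact and $\theta\subseteq\ker(h)$; (2) if $\theta$ is projective and $\theta\subseteq\ker(h)$, then $\theta\in\mathscr G(h)$.
   Context: $\mathbf F_{\mathsf V}(z)$ is the free algebra of the variety $\mathsf V$ on one generator $z$. An algebra is projective in $\mathsf V$ iff it is a retract of a free algebra of $\mathsf V$ (there are homomorphisms $i:\mathbf P\to\mathbf F_{\mathsf V}(Y)$, $j:\mathbf F_{\mathsf V}(Y)\to\mathbf P$ with $j\circ i=\mathrm{id}$); it is exact in $\mathsf V$ if isomorphic to a finitely generated subalgebra of a finitely generated free algebra of $\mathsf V$. A congruence $\theta$ of $\mathbf F_{\mathsf V}(z)$ is exact (resp. projective) if $\mathbf F_{\mathsf V}(z)/\theta$ is exact (resp. projective) in $\mathsf V$. An algebraic e-generalization problem is a homomorphism $h:\mathbf F_{\mathsf V}(z)\to\prod_{k=1}^m\mathbf E_k$ with each $\mathbf E_k$ a 1-generated exact algebra and $p_k\circ h$ surjective for each projection $p_k$. A solution of $h$ is a homomorphism $g:\mathbf F_{\mathsf V}(z)\to\mathbf P$ with $\mathbf P$ finitely generated and projective in $\mathsf V$ such that $f\circ g=h$ for some homomorphism $f:\mathbf P\to\prod_k\mathbf E_k$. $\ker(g)=\{(a,a'):g(a)=g(a')\}$. $\mathscr G(h)$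 is the set of G-congruences of $h$, i.e. $\{\ker(g): g \text{ a solution of } h\}$. *)

From mathcomp Require Import all_boot.
From Stdlib Require Import ClassicalEpsilon.

Set Implicit Arguments.
Unset Strict Implicit.
Unset Printing Implicit Defensive.

Record signature := Signature { ops : Type; ar : ops -> nat }.

Record algebra (L : signature) := Algebra {
  carrier :> Type;
  op : forall o : ops L, ('I_(ar o) -> carrier) -> carrier }.
Arguments op {L} a o _.

Section UA.
Variable L : signature.

Inductive term (X : Type) : Type :=
  | Var : X -> term X
  | App : forall o : ops L, ('I_(ar o) -> term X) -> term X.

Fixpoint eval (A : algebra L) (X : Type) (env : X -> A) (t : term X) : A :=
  match t with
  | Var x => env x
  | App o args => op A o (fun i => eval env (args i))
  end.

(** A variety, given by a set of identities (Birkhoff). *)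
Record variety := Variety { identities : term nat -> term nat -> Prop }.

Definition inV (V : variety) (A : algebra L) : Prop :=
  forall s t, identities V s t -> forall env : nat -> A, eval env s = eval env t.

Definition hom (A B : algebra L) (f : A -> B) : Prop :=
  forall o (args : 'I_(ar o) -> A), f (op A o args) = op B o (fun i => f (args i)).

Definition iso (A B : algebra L) : Prop :=
  exists (f : A -> B) (g : B -> A),
    hom f /\ (forall a, g (f a) = a) /\ (forall b, f (g b) = b).

Definition closed (A : algebra L) (U : A -> Prop) : Prop :=
  forall o (args : 'I_(ar o) -> A), (forall i, U (args i)) -> U (op A o args).

Definition generated (A : algebra L) (S : A -> Prop) (x : A) : Prop :=
  forall U : A -> Prop, closed U -> (forall y, S y -> U y) -> U x.

Definition fin_generated (A : algebra L) : Prop :=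
  exists (n : nat) (gens : 'I_n -> A),
    forall x, generated (fun y => exists i, y = gens i) x.

Definition one_generated (A : algebra L) : Prop :=
  exists a : A, forall x, generated (fun y => y = a) x.

Definition subalg (A : algebra L) (U : A -> Prop) (HU : closed U) : algebra L :=
  @Algebra L {x : A | U x}
    (fun o args => exist U (op A o (fun i => proj1_sig (args i)))
                         (HU o _ (fun i => proj2_sig (args i)))).

Definition is_free (V : variety) (Y : Type) (F : algebra L) (gen : Y -> F) : Prop :=
  inV V F /\
  forall (B : algebra L) (f : Y -> B), inV V B ->
    (exists g : F -> B, hom g /\ forall y, g (gen y) = f y) /\
    (forall g1 g2 : F -> B, hom g1 -> hom g2 ->
       (forall y, g1 (gen y) = g2 (gen y)) -> forall x, g1 x = g2 x).

Definition projective (V : variety) (P : algebra L) : Prop :=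
  exists (Y : Type) (F : algebra L) (gen : Y -> F), is_free V gen /\
  exists (i : P -> F) (j : F -> P), hom i /\ hom j /\ forall p, j (i p) = p.

Definition exact (V : variety) (P : algebra L) : Prop :=
  exists (Y : Type) (F : algebra L) (gen : Y -> F), is_free V gen /\ fin_generated F /\
  exists (U : F -> Prop) (HU : closed U),
    fin_generated (subalg HU) /\ iso P (subalg HU).

Definition congruence (A : algebra L) (th : A -> A -> Prop) : Prop :=
  (forall a, th a a) /\ (forall a b, th a b -> th b a) /\
  (forall a b c, th a b -> th b c -> th a c) /\
  (forall o (args1 args2 : 'I_(ar o) -> A),
     (forall i, th (args1 i) (args2 i)) -> th (op A o args1) (op A o args2)).

Definition qcarrier (A : algebra L) (th : A -> A -> Prop) : Type :=
  {c : A -> Prop | exists a, c = th a}.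

Definition qrep (A : algebra L) (th : A -> A -> Prop) (c : qcarrier th) : A :=
  proj1_sig (constructive_indefinite_description _ (proj2_sig c)).

Definition qclass (A : algebra L) (th : A -> A -> Prop) (a : A) : qcarrier th :=
  exist (fun c => exists a, c = th a) (th a) (ex_intro _ a erefl).

(** The quotient algebra A / th (meaningful when th is a congruence). *)
Definition quotient (A : algebra L) (th : A -> A -> Prop) : algebra L :=
  @Algebra L (qcarrier th)
    (fun o args => qclass th (op A o (fun i => qrep (args i)))).

Definition exact_cong (V : variety) (A : algebra L) (th : A -> A -> Prop) : Prop :=
  exact V (quotient th).
Definition projective_cong (V : variety) (A : algebra L) (th : A -> A -> Prop) : Prop :=
  projective V (quotient th).

Definition ker (A B : Type) (g : A -> B) : A -> A -> Prop := fun a a' => g a = g a'.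
Definition rel_sub (A : Type) (r s : A -> A -> Prop) : Prop := forall a a', r a a' -> s a a'.
Definition rel_eq (A : Type) (r s : A -> A -> Prop) : Prop := forall a a', r a a' <-> s a a'.

Definition prod_alg (m : nat) (E : 'I_m -> algebra L) : algebra L :=
  @Algebra L (forall k : 'I_m, E k)
    (fun o args => fun k => op (E k) o (fun i => args i k)).

Definition e_gen_problem (V : variety) (F : algebra L) (m : nat)
    (E : 'I_m -> algebra L) (h : F -> prod_alg E) : Prop :=
  hom h /\ (forall k, one_generated (E k) /\ exact V (E k)) /\
  (forall k (e : E k), exists a : F, h a k = e).

Definition solution (V : variety) (F : algebra L) (m : nat)
    (E : 'I_m -> algebra L) (h : F -> prod_alg E)
    (P : algebra L) (g : F -> P) : Prop :=
  hom g /\ fin_generated P /\ projective V P /\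
  exists f : P -> prod_alg E, hom f /\ forall a, f (g a) = h a.

Definition G_cong (V : variety) (F : algebra L) (m : nat)
    (E : 'I_m -> algebra L) (h : F -> prod_alg E) (th : F -> F -> Prop) : Prop :=
  exists (P : algebra L) (g : F -> P), solution V h g /\ rel_eq th (ker g).

End UA.

From mathcomp Require Import all_boot.
From Stdlib Require Import ClassicalEpsilon ProofIrrelevance.
From Stdlib Require Import FunctionalExtensionality PropExtensionality.

Set Implicit Arguments.
Unset Strict Implicit.
Unset Printing Implicit Defensive.

(* Part (2) is immediate: the quotient map [F -> F/th] is a solution, through which [h] factors
   because [th] is contained in [ker h].  For part (1), let [g : F -> P] be a solution with kernel
   [th]; then [h = f \o g] gives [th <= ker h].  [P] is a retract of a free algebra [F_V(Y)], and
   since [P] is finitely generated its image involves only finitely many free generators; the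
   subalgebra they generate is again free, and finitely generated.  So [F/th], isomorphic to the
   one-generated algebra [g(F)], embeds in a finitely generated free algebra: [th] is exact. *)

Definition range (X T : Type) (f : X -> T) : T -> Prop := fun t => exists x, t = f x.

Lemma sval_inj (T : Type) (P : T -> Prop) : injective (@proj1_sig T P).
Proof. by move=> [x px] [y py] /= exy; subst y; rewrite (proof_irrelevance _ px py). Qed.

Section UniversalAlgebra.
Variable L : signature.
Implicit Types A B F P : algebra L.

Lemma hom_eval A B (f : A -> B) (X : Type) (env : X -> A) (t : term L X) :
  hom f -> f (eval env t) = eval (f \o env) t.
Proof.
move=> homf; elim: t => [x|o args IH] //=.
by rewrite homf; congr (op _ o _); apply: functional_extensionality.
Qed.

Lemma inV_subalg (V : variety L) A (U : A -> Prop) (HU : closed U) :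
  inV V A -> inV V (subalg HU).
Proof.
move=> VA s t st env; apply: sval_inj.
have homsval : hom (fun x : subalg HU => sval x) by [].
by rewrite !(hom_eval _ _ homsval); apply: VA.
Qed.

Lemma generated_closed A (S : A -> Prop) : closed (generated S).
Proof. by move=> o args gen_args W closedW SW; apply: (closedW) => i; exact: gen_args. Qed.

Lemma generated_base A (S : A -> Prop) x : S x -> generated S x.
Proof. by move=> Sx W _; apply. Qed.

Lemma generated_ind A (S W : A -> Prop) x :
  closed W -> (forall y, S y -> W y) -> generated S x -> W x.
Proof. by move=> closedW SW; apply. Qed.

Lemma generated_mono A (S S' : A -> Prop) x :
  (forall y, S y -> S' y) -> generated S x -> generated S' x.
Proof.
by move=> SS'; apply: generated_ind => [|y /SS']; [apply: generated_closed|apply: generated_base].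
Qed.

Lemma generated_range_hom A B (f : A -> B) (I : Type) (gens : I -> A) x :
  hom f -> generated (range gens) x -> generated (range (f \o gens)) (f x).
Proof.
move=> homf genx W closedW gensW; apply: (genx (fun a => W (f a))) => [o args Wargs|_ [i ->]].
  by rewrite homf; apply: closedW.
by apply: gensW; exists i.
Qed.

Lemma hom_eq_on_generated A B (f g : A -> B) (S : A -> Prop) :
  hom f -> hom g -> (forall y, S y -> f y = g y) -> forall x, generated S x -> f x = g x.
Proof.
move=> homf homg Sfg x; apply: generated_ind Sfg => o args fg_args.
by rewrite homf homg; congr (op _ o _); apply: functional_extensionality.
Qed.

Lemma generated_subalg A (U : A -> Prop) (HU : closed U) (I : Type) (gens : I -> subalg HU) x :
  generated (range (fun i => sval (gens i))) (sval x) -> generated (range gens) x.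
Proof.
move=> genx W closedW gensW.
suff [Ux Wx] : exists Ux : U (sval x), W (exist U (sval x) Ux).
  by rewrite (_ : x = exist U (sval x) Ux) //; apply: sval_inj.
apply: (genx (fun v => exists Uv : U v, W (exist U v Uv))) => [o args Wargs|_ [i ->]].
  pose pick i := constructive_indefinite_description _ (Wargs i).
  exists (HU o args (fun i => sval (pick i))).
  exact: (closedW o (fun i => exist U (args i) (sval (pick i))) (fun i => svalP (pick i))).
move: (gensW (gens i) (ex_intro _ i erefl)); case: (gens i) => a Ua Wa.
by exists Ua.
Qed.

Lemma fin_generated_fintype A (I : finType) (gens : I -> A) :
  (forall x, generated (range gens) x) -> fin_generated A.
Proof.
move=> gen_all; exists #|I|, (gens \o enum_val) => x.
by apply: generated_mono (gen_all x) => _ [i ->]; exists (enum_rank i); rewrite /= enum_rankK.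
Qed.

Lemma fin_generated_surj A B (f : A -> B) :
  hom f -> (forall b, exists a, b = f a) -> fin_generated A -> fin_generated B.
Proof.
move=> homf surjf [n [gens gen_all]]; exists n, (f \o gens) => b.
by have [a ->] := surjf b; apply: generated_range_hom.
Qed.

Lemma fin_support_family A (Y : Type) (gen : Y -> A) (J : finType) (xs : J -> A) :
  (forall j, exists (I : finType) (ys : I -> Y), generated (range (gen \o ys)) (xs j)) ->
  exists (I : finType) (ys : I -> Y), forall j, generated (range (gen \o ys)) (xs j).
Proof.
move=> supp.
pose I_ j := sval (constructive_indefinite_description _ (supp j)).
have ys_ j : {ys : I_ j -> Y | generated (range (gen \o ys)) (xs j)}.
  exact: constructive_indefinite_description
    (svalP (constructive_indefinite_description _ (supp j))).
exists {j : J & I_ j}, (fun t => sval (ys_ (tag t)) (tagged t)) => j.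
by apply: generated_mono (svalP (ys_ j)) => _ [i ->]; exists (Tagged I_ i).
Qed.

Lemma generated_fin_support A (Y : Type) (gen : Y -> A) x :
  generated (range gen) x -> exists (I : finType) (ys : I -> Y), generated (range (gen \o ys)) x.
Proof.
apply: (generated_ind (W := fun x => exists (I : finType) (ys : I -> Y),
  generated (range (gen \o ys)) x)) => [o args supp|_ [y ->]].
  have [I [ys gen_args]] := fin_support_family supp.
  by exists I, ys; apply: generated_closed.
by exists unit, (fun _ => y); apply: generated_base; exists tt.
Qed.

Lemma range_closed A B (f : A -> B) : hom f -> closed (range f).
Proof.
move=> homf o args rargs.
pose pre i := sval (constructive_indefinite_description _ (rargs i)).
exists (op A o pre); rewrite homf; congr (op _ o _); apply: functional_extensionality => i.
exact: svalP (constructive_indefinite_description _ (rargs i)).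
Qed.

Lemma free_generated (V : variety L) (Y : Type) F (gen : Y -> F) :
  is_free V gen -> forall x, generated (range gen) x.
Proof.
move=> [VF univF] x.
pose HSg := generated_closed (S := range gen).
pose gen' y : subalg HSg := exist _ (gen y) (generated_base (ex_intro _ y erefl)).
have [g [homg gg']] := (univF _ gen' (inV_subalg (HU := HSg) VF)).1.
have <- : sval (g x) = x.
  apply: ((univF _ gen VF).2 (fun a => sval (g a)) id) => // [o args|y]; first by rewrite homg.
  by rewrite gg'.
exact: svalP (g x).
Qed.

Section FreeSubalgebra.
Variables (Y : Type) (F : algebra L) (gen : Y -> F) (S : Y -> Prop).

Definition gen_subalg := subalg (generated_closed (S := range (fun s : sig S => gen (sval s)))).

Definition gen_sub (s : sig S) : gen_subalg :=
  exist _ (gen (sval s)) (generated_base (ex_intro _ s erefl)).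

Lemma generated_gen_sub x : generated (range gen_sub) x.
Proof. exact: (generated_subalg (gens := gen_sub) (svalP x)). Qed.

Variable V : variety L.
Hypothesis free_gen : is_free V gen.

(* The map [Y -> sig S] only serves to extend maps on [sig S] to all of [Y]. *)
Lemma is_free_gen_sub : (Y -> sig S) -> is_free V gen_sub.
Proof.
move=> dflt; have [VF univF] := free_gen.
split; first exact: inV_subalg.
move=> B f VB; split.
  pose f' y :=
    if excluded_middle_informative (S y) is left Sy then f (exist S y Sy) else f (dflt y).
  have [g [homg gf']] := (univF B f' VB).1.
  exists (fun x : gen_subalg => g (sval x)); split=> [o args|[y Sy]]; first exact: homg.
  rewrite /= gf' /f'; case: excluded_middle_informative => [Sy'|/(_ Sy) []].
  by rewrite (proof_irrelevance _ Sy Sy').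
move=> g1 g2 homg1 homg2 g12 x.
by apply: (hom_eq_on_generated homg1 homg2 _ (generated_gen_sub x)) => _ [s ->].
Qed.

End FreeSubalgebra.

Lemma fin_generated_gen_subalg Y F (gen : Y -> F) (I : finType) (ys : I -> Y) :
  fin_generated (gen_subalg gen (range ys)).
Proof.
apply: (fin_generated_fintype
  (gens := fun i => gen_sub gen (exist (range ys) (ys i) (ex_intro _ i erefl)))) => x.
apply: generated_subalg; apply: generated_mono (svalP x) => _ [[y [i eyi]] ->].
by exists i; rewrite /= eyi.
Qed.

Lemma projective_embeds_fin_free (V : variety L) (P : algebra L) :
  projective V P -> fin_generated P ->
  exists (Y : Type) (B : algebra L) (gen : Y -> B), is_free V gen /\ fin_generated B /\
    exists e : P -> B, hom e /\ injective e.
Proof.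
move=> [Y [F [gen [free_gen [i [j [homi [_ ij]]]]]]]] [n [gens gen_all]].
have [I [ys iP]] : exists (I : finType) (ys : I -> Y),
    forall p, generated (range (gen \o ys)) (i p).
  have [I [ys gens_in]] := fin_support_family
    (fun k => generated_fin_support (free_generated free_gen (i (gens k)))).
  exists I, ys => p; apply: generated_ind (generated_range_hom homi (gen_all p)).
    exact: generated_closed.
  by move=> _ [k ->]; apply: gens_in.
have [I' [ys' [dflt iP']]] : exists (I' : finType) (ys' : I' -> Y) (dflt : Y -> I'),
    forall p, generated (range (gen \o ys')) (i p).
  case: (classic (inhabited Y)) => [[y0]|noY].
    exists (option I), (oapp ys y0), (fun _ => None) => p.
    by apply: generated_mono (iP p) => _ [k ->]; exists (Some k).
  by exists I, ys, (fun y => match noY (inhabits y) with end).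
pose S := range ys'.
exists (sig S), (gen_subalg gen S), (gen_sub gen (S := S)); split.
  exact: (is_free_gen_sub free_gen (fun y => exist S (ys' (dflt y)) (ex_intro _ _ erefl))).
split; first exact: fin_generated_gen_subalg.
have iS p : generated (range (fun s : sig S => gen (sval s))) (i p).
  by apply: generated_mono (iP' p) => _ [k ->]; exists (exist S (ys' k) (ex_intro _ k erefl)).
exists (fun p => exist _ (i p) (iS p)); split.
  by move=> o args; apply: sval_inj; exact: homi.
by move=> p q /(f_equal (fun x => j (sval x))); rewrite /= !ij.
Qed.

Section Quotient.
Variables (A : algebra L) (th : A -> A -> Prop).

Lemma qclassK (c : quotient th) : qclass th (qrep c) = c.
Proof.
apply: sval_inj; rewrite /qrep /=.
by case: (constructive_indefinite_description _ _) => a /= ->.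
Qed.

Lemma qclass_surj (c : quotient th) : exists a, c = qclass th a.
Proof. by exists (qrep c); rewrite qclassK. Qed.

Hypothesis congr_th : congruence th.

Lemma ker_qclass : rel_eq th (ker (qclass th)).
Proof.
have [threfl [thsym [thtrans _]]] := congr_th.
move=> a b; split => [thab|/(f_equal sval) /= ->]; last exact: threfl.
apply: sval_inj; apply: functional_extensionality => c /=; apply: propositional_extensionality.
by split => [thac|thbc]; [exact: thtrans (thsym _ _ thab) thac | exact: thtrans thab thbc].
Qed.

Lemma th_qrep a : th (qrep (qclass th a)) a.
Proof. by apply/ker_qclass; rewrite /ker qclassK. Qed.

Lemma qclass_hom : hom (qclass th : A -> quotient th).
Proof.
have [_ [thsym [_ thop]]] := congr_th.
by move=> o args; apply/ker_qclass; apply: thop => i; apply: thsym; apply: th_qrep.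
Qed.

Lemma lift_qclass B (f : A -> B) a : rel_sub th (ker f) -> f (qrep (qclass th a)) = f a.
Proof. by move=> thf; apply: thf; apply: th_qrep. Qed.

Lemma hom_lift B (f : A -> B) :
  hom f -> rel_sub th (ker f) -> hom (fun c : quotient th => f (qrep c)).
Proof. by move=> homf thf o args /=; rewrite lift_qclass // homf. Qed.

Lemma iso_quotient_surj B (f : A -> B) :
  hom f -> (forall b, exists a, b = f a) -> rel_eq th (ker f) -> iso (quotient th) B.
Proof.
move=> homf surjf thf.
have fth : rel_sub th (ker f) by move=> a a' /thf.
pose pre b := sval (constructive_indefinite_description _ (surjf b)).
have preK b : b = f (pre b) := svalP (constructive_indefinite_description _ (surjf b)).
exists (fun c => f (qrep c)), (fun b => qclass th (pre b)); split; first exact: hom_lift.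
split=> [c|b]; last by rewrite lift_qclass // -preK.
by rewrite -[RHS]qclassK; apply/ker_qclass/thf; rewrite /ker -preK.
Qed.

End Quotient.

Lemma exact_quotient_ker (V : variety L) A B (Y : Type) (gen : Y -> B) (f : A -> B)
    (th : A -> A -> Prop) :
  is_free V gen -> fin_generated B -> fin_generated A -> hom f -> congruence th ->
  rel_eq th (ker f) -> exact V (quotient th).
Proof.
move=> free_gen finB finA homf congr_th thf.
pose cof a : subalg (range_closed homf) := exist _ (f a) (ex_intro _ a erefl).
have homcof : hom cof by move=> o args; apply: sval_inj; exact: homf.
have surjcof b : exists a, b = cof a by case: b => x [a xa]; exists a; apply: sval_inj.
exists Y, B, gen; do 2!split=> //; exists (range f), (range_closed homf); split.
  exact: fin_generated_surj homcof surjcof finA.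
apply: iso_quotient_surj homcof surjcof _ => // a a'.
rewrite thf /ker; split => [faa'|/(f_equal sval) //].
by apply: sval_inj.
Qed.

End UniversalAlgebra.

Lemma G_cong_exact (L : signature) (V : variety L) (F : algebra L) (m : nat)
    (E : 'I_m -> algebra L) (h : F -> prod_alg E) (th : F -> F -> Prop) :
  fin_generated F -> congruence th -> G_cong V h th -> exact_cong V th /\ rel_sub th (ker h).
Proof.
move=> finF congr_th [P [g [[homg [finP [projP [f [_ fgh]]]]] thg]]].
split; last by move=> a a' /thg; rewrite /ker -!fgh => ->.
have [Y [B [gen [free_gen [finB [e [home inj_e]]]]]]] := projective_embeds_fin_free projP finP.
apply: (exact_quotient_ker (f := e \o g) free_gen finB finF _ congr_th).
  by move=> o args /=; rewrite homg home.
by move=> a a'; rewrite thg /ker /=; split => [->|/inj_e].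
Qed.

Lemma projective_G_cong (L : signature) (V : variety L) (F : algebra L) (m : nat)
    (E : 'I_m -> algebra L) (h : F -> prod_alg E) (th : F -> F -> Prop) :
  fin_generated F -> hom h -> congruence th ->
  projective_cong V th -> rel_sub th (ker h) -> G_cong V h th.
Proof.
move=> finF homh congr_th projth thh.
exists (quotient th), (qclass th); split; last exact: ker_qclass.
split; first exact: qclass_hom.
split; first exact: fin_generated_surj (qclass_hom congr_th) (@qclass_surj _ _ th) finF.
split=> //; exists (fun c => h (qrep c)); split; first exact: hom_lift.
by move=> a; apply: lift_qclass.
Qed.

Theorem theorem4p6 (L : signature) (V : variety L) (F : algebra L) (z : F)
    (Hfree : is_free V (fun _ : unit => z))
    (m : nat) (E : 'I_m -> algebra L) (h : F -> prod_alg E)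
    (Hh : e_gen_problem V h)
    (th : F -> F -> Prop) (Hth : congruence th) :
  (G_cong V h th -> exact_cong V th /\ rel_sub th (ker h)) /\
  (projective_cong V th -> rel_sub th (ker h) -> G_cong V h th).
Proof.
have finF : fin_generated F := fin_generated_fintype (free_generated Hfree).
split; first exact: G_cong_exact.
exact: projective_G_cong Hh.1 Hth.
Qed.
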